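(* Let $m_a, M_a \in \mathbb{R}$ and $x_a>1$, and suppose that for all $x > x_a$ $$ x \sum_{k=0}^{4} \frac{k!}{\log^{k+1}x}+ \frac{m_a x}{\log^6 x} < \pi(x) < x \sum_{k=0}^{4} \frac{k!}{\log^{k+1}x}+\frac{M_a x}{\log^6 x}.$$ Then there exists a number $x_a'$, determined completely by $m_a$, $M_a$ and $x_a$, such that $$\pi(x)^2 < \frac{e\,x}{\log x}\,\pi\!\Big(\frac{x}{e}\Big)$$ holds for all $x > \max(e\,x_a, x_a')$.
   Context: $\pi(x)$ denotes the number of primes less than or equal to $x$; $\log$ is the natural logarithm. *)

From Stdlib Require Import Reals ZArith Znumtheory List Arith.
Open Scope R_scope.

Definition prime_count (n : nat) : nat :=
  length (filter (fun k => if prime_dec (Z.of_nat k) then true else false)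
                 (seq 0 (S n))).

(* pi(x) = #{ p prime : p <= x } = prime_count (floor x); 0 for x < 0 *)
Definition prime_pi (x : R) : R :=
  INR (prime_count (Z.to_nat (Int_part x))).

Definition li_approx (x : R) : R :=
  x * sum_f_R0 (fun k => INR (fact k) / (ln x) ^ (S k)) 4.

From Stdlib Require Import Reals Lra List.
Import ListNotations.
Open Scope R_scope.

(* Write [t = 1/log x]. By hypothesis [pi x < x P_M(t)] and, since
   [1/log (x/e) = t/(1-t)], [pi (x/e) > (x/e) P_m(t/(1-t))], where
   [P_c(u) = u + u^2 + 2u^3 + 6u^4 + 24u^5 + c u^6]. It therefore suffices that
   [P_M(t)^2 < t P_m(t/(1-t))]. The difference of the two sides is
   [t^6 (1 + t Q(t)) / (1-t)^6] for an explicit polynomial [Q] whose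
   coefficients depend on [m] and [M] only, and [|Q(t)|] is bounded on [0 < t < 1]
   by the sum [K] of the absolute values of these coefficients. Hence the
   inequality holds as soon as [log x > 1 + K]. *)

Definition horner (cs : list R) (t : R) : R :=
  fold_right (fun c acc => c + t * acc) 0 cs.

Definition abs_sum (cs : list R) : R :=
  fold_right (fun c acc => Rabs c + acc) 0 cs.

Lemma abs_sum_ge0 (cs : list R) : 0 <= abs_sum cs.
Proof.
  induction cs as [|c cs IH]; simpl; [lra|].
  pose proof (Rabs_pos c); lra.
Qed.

Lemma Rabs_horner_le (cs : list R) (t : R) :
  Rabs t <= 1 -> Rabs (horner cs t) <= abs_sum cs.
Proof.
  intros Ht; induction cs as [|c cs IH]; simpl.
  - rewrite Rabs_R0; lra.
  - fold (horner cs t) (abs_sum cs).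
    assert (Htp : Rabs (t * horner cs t) <= abs_sum cs).
    { rewrite Rabs_mult.
      pose proof (Rabs_pos t); pose proof (Rabs_pos (horner cs t)); nra. }
    pose proof (Rabs_triang c (t * horner cs t)); lra.
Qed.

Lemma one_add_mul_horner_gt0 (cs : list R) (t : R) :
  0 < t <= 1 -> t * abs_sum cs < 1 -> 0 < 1 + t * horner cs t.
Proof.
  intros Ht HtK.
  assert (Hb : Rabs (horner cs t) <= abs_sum cs)
    by (apply Rabs_horner_le; rewrite Rabs_pos_eq; lra).
  pose proof (Rle_abs (- horner cs t)) as Hneg; rewrite Rabs_Ropp in Hneg.
  nra.
Qed.

Definition asymp_poly (c u : R) : R :=
  u + u ^ 2 + 2 * u ^ 3 + 6 * u ^ 4 + 24 * u ^ 5 + c * u ^ 6.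

Lemma li_approx_add_err (c x : R) : ln x <> 0 ->
  li_approx x + c * x / ln x ^ 6 = x * asymp_poly c (/ ln x).
Proof. intros HL; unfold li_approx, asymp_poly; simpl; field; exact HL. Qed.

Definition gap_coeffs (m M : R) : list R :=
  [ 128 - 2 * M + m;
    -404 + 10 * M;
    492 - 22 * M;
    -257 + 22 * M;
    1064 - 26 * M;
    -4492 + 170 * M - M ^ 2;
    7920 - 530 * M + 6 * M ^ 2;
    -7044 + 802 * M - 15 * M ^ 2;
    3168 - 652 * M + 20 * M ^ 2;
    -576 + 276 * M - 15 * M ^ 2;
    -48 * M + 6 * M ^ 2;
    - M ^ 2 ].

Lemma asymp_poly_gap (m M t : R) : t <> 1 ->
  t * asymp_poly m (t / (1 - t)) - asymp_poly M t ^ 2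
  = t ^ 6 * (1 + t * horner (gap_coeffs m M) t) / (1 - t) ^ 6.
Proof.
  intros Ht; unfold asymp_poly, gap_coeffs, horner; simpl.
  field; lra.
Qed.

Lemma asymp_poly_sq_lt (m M t : R) :
  0 < t < 1 -> t * abs_sum (gap_coeffs m M) < 1 ->
  asymp_poly M t ^ 2 < t * asymp_poly m (t / (1 - t)).
Proof.
  intros Ht HtK.
  assert (Hgap : 0 < t ^ 6 * (1 + t * horner (gap_coeffs m M) t) / (1 - t) ^ 6).
  { apply Rdiv_lt_0_compat; [apply Rmult_lt_0_compat|].
    - apply pow_lt; lra.
    - apply one_add_mul_horner_gt0; lra.
    - apply pow_lt; lra. }
  rewrite <- asymp_poly_gap in Hgap by lra; lra.
Qed.

Lemma sq_lt_of_bounds (p q a b k : R) :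
  0 <= p -> p < a -> a ^ 2 < k * b -> 0 < k -> b < q -> p ^ 2 < k * q.
Proof. intros Hp Hpa Hab Hk Hbq; nra. Qed.

Lemma ln_div_e (x : R) : 0 < x -> ln (x / exp 1) = ln x - 1.
Proof.
  intros Hx; unfold Rdiv.
  rewrite ln_mult, ln_Rinv, ln_exp by (try apply Rinv_0_lt_compat; apply exp_pos || lra).
  ring.
Qed.

Theorem lemma1 :
  exists xa' : R -> R -> R -> R,
  forall (ma Ma xa : R), 1 < xa ->
    (forall x, xa < x ->
       li_approx x + ma * x / (ln x) ^ 6 < prime_pi x /\
       prime_pi x < li_approx x + Ma * x / (ln x) ^ 6) ->
    forall x, Rmax (exp 1 * xa) (xa' ma Ma xa) < x ->
      (prime_pi x) ^ 2 < exp 1 * x / ln x * prime_pi (x / exp 1).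
Proof.
  exists (fun ma Ma _ => exp (1 + abs_sum (gap_coeffs ma Ma))).
  intros ma Ma xa Hxa Hpi x Hx.
  apply Rmax_Rlt in Hx as [Hxe HxK].
  pose proof (abs_sum_ge0 (gap_coeffs ma Ma)) as HK.
  set (K := abs_sum (gap_coeffs ma Ma)) in *.
  assert (He : 1 < exp 1) by (pose proof (exp_ineq1 1 ltac:(lra)); lra).
  assert (Hx0 : 0 < x) by (pose proof (exp_pos (1 + K)); lra).
  assert (HL : 1 + K < ln x).
  { rewrite <- (ln_exp (1 + K)); apply ln_increasing; [apply exp_pos | lra]. }
  assert (Hxe' : xa < x / exp 1)
    by (apply (Rmult_lt_reg_l (exp 1)); [lra|]; field_simplify; lra).
  set (t := / ln x).
  assert (Ht : 0 < t < 1) by (unfold t; split;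
    [apply Rinv_0_lt_compat | rewrite <- Rinv_1; apply Rinv_lt_contravar]; lra).
  assert (HtK : t * K < 1)
    by (apply (Rmult_lt_reg_l (ln x)); [lra|]; unfold t; field_simplify; lra).
  assert (Hs : / ln (x / exp 1) = t / (1 - t))
    by (rewrite ln_div_e by lra; unfold t; field; lra).
  destruct (Hpi x ltac:(nra)) as [_ Hup].
  destruct (Hpi (x / exp 1) Hxe') as [Hlo _].
  rewrite li_approx_add_err in Hup by lra.
  rewrite li_approx_add_err, Hs in Hlo by (rewrite ln_div_e; lra).
  replace (exp 1 * x / ln x) with (exp 1 * x * t) by (unfold t; field; lra).
  apply (sq_lt_of_bounds _ _ (x * asymp_poly Ma t) (x / exp 1 * asymp_poly ma (t / (1 - t))));
    [apply pos_INR | exact Hup | | | exact Hlo].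
  - replace (exp 1 * x * t * (x / exp 1 * asymp_poly ma (t / (1 - t))))
      with (x ^ 2 * (t * asymp_poly ma (t / (1 - t)))) by (field; lra).
    rewrite Rpow_mult_distr.
    apply Rmult_lt_compat_l; [nra | apply asymp_poly_sq_lt; assumption].
  - repeat apply Rmult_lt_0_compat; lra.
Qed.
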